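(* Let $\mathcal S$ be an ash on a set $S$, let $\mu:S\to\{2\}$, and let $\mathcal A_{\mathcal S}$ be the set of (isomorphism types of) finite relational structures $\mathfrak A=(A;(R_s)_{s\in S})$ of signature $\mu$ such that for all $x,y,z\in A$ and $s,t\in S$: (1) $\neg R_s(x,x)$; (2) if $R_s(x,y)$ then $R_s(y,x)$; (3) if $R_s(x,y)$ and $R_t(x,y)$ then $s=t$, and if $R_s(x,y)$ and $R_s(x,z)$ then $y=z$; (4) if $x\neq y$ there is $r\in S$ with $R_r(x,y)$; (5) every non-empty subset of $\{r\in S:\exists u\in A\ R_r(x,u)\}$ is an element of $\mathcal S$. Then $\mathcal A_{\mathcal S}$ is an ideal of $\Omega_\mu$.
   Context: An ash on a set $S$ is a set $\mathcal S$ of finite subsets of $S$ such that: (a) $\{s\}\in\mathcal S$ for every $s\in S$; (b) for every finite subset $\mathcal F\subseteq\mathcal S$ there is $s\in S\setminus\bigcup\mathcal F$ with $\{s\}\cup F\in\mathcal S$ for every $F\in\mathcal F$; (c) for every $S'\subseteq S$ with $|S'|=|S|$ there is a finite $F\subseteq S'$ with $F\notin\mathcal S$. A relational structure of signature $\mu:S\to\{2\}$ is a set with a family of binary relations indexed by $S$. $\Omega_\mu$ is the set of isomorphism types of finite such structures, ordered by embeddability (embeddings are injective maps preserving and reflecting all relations). An ideal of $\Omega_\mu$ is a non-empty, downward closed, up-directed subset. *)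

From mathcomp Require Import all_boot.
From Stdlib Require Import List.
Set Implicit Arguments. Unset Strict Implicit. Unset Printing Implicit Defensive.

Definition finite_set {S : Type} (P : S -> Prop) : Prop :=
  exists l : list S, forall x, P x <-> List.In x l.

Definition same_card_as_whole {S : Type} (P : S -> Prop) : Prop :=
  exists f : {x : S | P x} -> S, bijective f.

Definition is_ash {S : Type} (A : (S -> Prop) -> Prop) : Prop :=
  (forall F, A F -> finite_set F) /\
  (forall s : S, A (fun x => x = s)) /\
  (* (b) finite families are given as lists *)
  (forall Fs : list (S -> Prop), (forall F, List.In F Fs -> A F) ->
     exists s : S, (forall F, List.In F Fs -> ~ F s) /\
                   (forall F, List.In F Fs -> A (fun x => x = s \/ F x))) /\
  (forall S' : S -> Prop, same_card_as_whole S' ->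
     exists F : S -> Prop, finite_set F /\ (forall x, F x -> S' x) /\ ~ A F).

(* Finite relational structures of signature mu : S -> {2}
   (every symbol binary); the universe is {0,...,n-1}. Every finite structure
   is isomorphic to one of these. *)
Record fstruct (S : Type) := FStruct {
  fsize : nat;
  frel : S -> 'I_fsize -> 'I_fsize -> Prop
}.
Arguments fsize {S} f.
Arguments frel {S} f s x y.

Definition embedding {S : Type} (B A : fstruct S) (f : 'I_(fsize B) -> 'I_(fsize A)) : Prop :=
  injective f /\ forall s x y, frel B s x y <-> frel A s (f x) (f y).

Definition embeds {S : Type} (B A : fstruct S) : Prop :=
  exists f, @embedding S B A f.

(* A subset of Omega_mu is represented by a class of finite structures;
   an ideal: non-empty, downward closed (under embeddability), up-directed. *)
Definition is_ideal_Omega {S : Type} (C : fstruct S -> Prop) : Prop :=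
  (exists A, C A) /\
  (forall A B, C A -> embeds B A -> C B) /\
  (forall A B, C A -> C B -> exists D, C D /\ embeds A D /\ embeds B D).

Definition in_A_ash {S : Type} (Ash : (S -> Prop) -> Prop) (A : fstruct S) : Prop :=
  forall (x y z : 'I_(fsize A)) (s t : S),
    ~ frel A s x x /\
    (frel A s x y -> frel A s y x) /\
    (frel A s x y -> frel A t x y -> s = t) /\
              (frel A s x y -> frel A s x z -> y = z) /\
    (x <> y -> exists r, frel A r x y) /\
    (forall T : S -> Prop, (exists r, T r) ->
                 (forall r, T r -> exists u, frel A r x u) -> Ash T).

From Pilot Require Import Defs.
From Stdlib Require Import List.
From mathcomp Require Import all_boot boolp.
Set Implicit Arguments. Unset Strict Implicit. Unset Printing Implicit Defensive.

(** The empty structure lies in A_S, and since embeddings preserve and reflect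
  all relations, conditions (1)-(5) pass to substructures.  For directedness,
  the disjoint union of A and B satisfies every condition except (4), and its
  missing edges are added one at a time.  An edge xy receives a symbol s
  obtained from ash axiom (b) applied to the finitely many nonempty sets of
  labels already present at x or at y: s then labels no edge at x or y, and
  adding s to any of these label sets stays in the ash, which preserves (3)
  and (5). *)

Lemma In_of_mem (T : eqType) (x : T) (s : seq T) : x \in s -> List.In x s.
Proof. by elim: s => //= y s IH; rewrite in_cons => /orP [/eqP ->|/IH]; auto. Qed.

Section Ash.

Variables (S : Type) (Ash : (S -> Prop) -> Prop).

Definition nonempty_subsets_in (P : S -> Prop) : Prop :=
  forall T : S -> Prop, (exists r, T r) -> (forall r, T r -> P r) -> Ash T.

Definition fresh_for (P : S -> Prop) (s : S) : Prop :=
  forall T : S -> Prop, (exists r, T r) -> (forall r, T r -> P r) ->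
    ~ T s /\ Ash (fun r => r = s \/ T r).

Lemma nonempty_subsets_in_sub (P Q : S -> Prop) :
  (forall r, P r -> Q r) -> nonempty_subsets_in Q -> nonempty_subsets_in P.
Proof. by move=> PQ subQ T Tne TP; apply: subQ => // r /TP /PQ. Qed.

Lemma fresh_for_notin P s : fresh_for P s -> ~ P s.
Proof.
by move=> fresh Ps; apply: (proj1 (fresh (fun r => r = s) _ _) erefl);
  [exists s | move=> r ->].
Qed.

Hypothesis ash_singleton : forall s : S, Ash (fun r => r = s).

Lemma nonempty_subsets_in_add P s :
  nonempty_subsets_in P -> fresh_for P s ->
  nonempty_subsets_in (fun r => P r \/ r = s).
Proof.
move=> subP fresh T [r0 Tr0] TPs.
have [Ts|nTs] := pselect (T s); last first.
  by apply: subP => [|r Tr]; [exists r0 | case: (TPs r Tr) => // rs; case: nTs; rewrite -rs].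
have [[r1 [Tr1 r1s]]|only_s] := pselect (exists r, T r /\ r <> s).
  have -> : T = (fun r => r = s \/ (T r /\ r <> s)).
    apply: funext => r; apply: propext; split; last by case=> [->|[]].
    by move=> Tr; have [->|] := pselect (r = s); [left | right].
  by apply: (proj2 (fresh _ _ _)) => [|r [Tr rs]]; [exists r1 | case: (TPs r Tr)].
have -> : T = (fun r => r = s) => //.
apply: funext => r; apply: propext; split => [Tr|->] //.
by have [|rs] := pselect (r = s); last by case: only_s; exists r.
Qed.

Lemma functional_subsets_listed (I : finType) (R : S -> I -> Prop) :
  (forall r t i, R r i -> R t i -> r = t) ->
  exists l : list (S -> Prop), forall T, List.In T l <->
    (exists r, T r) /\ (forall r, T r -> exists i, R r i).
Proof.
move=> R_fun; pose labels (A : {set I}) r := exists2 i, i \in A & R r i.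
pose used (A : {set I}) := [exists i in A, `[< exists r, R r i >]].
exists (List.map labels (List.filter used (enum {set I}))) => T.
rewrite List.in_map_iff; split.
  case=> A [<- /List.filter_In [_ /existsP [i /andP [iA /asboolP [r Rri]]]]].
  by split=> [|t [j _ Rtj]]; [exists r, i | exists j].
case=> [[r0 Tr0] TR]; exists [set i | `[< exists2 r, T r & R r i >]]; split.
  apply: funext => r; apply: propext; split.
    by case=> i; rewrite inE => /asboolP [t Tt Rti] Rri; rewrite (R_fun _ _ _ Rri Rti).
  by move=> Tr; have [i Rri] := TR r Tr; exists i => //; rewrite inE; apply/asboolP; exists r.
apply/List.filter_In; split; first by apply: In_of_mem; rewrite mem_enum.
have [i Rr0i] := TR r0 Tr0; apply/existsP; exists i; rewrite inE.
by apply/andP; split; apply/asboolP; exists r0.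
Qed.

Hypothesis ash_avoid : forall Fs : list (S -> Prop), (forall F, List.In F Fs -> Ash F) ->
  exists s : S, (forall F, List.In F Fs -> ~ F s) /\
                (forall F, List.In F Fs -> Ash (fun x => x = s \/ F x)).

Lemma exists_common_fresh (P Q : S -> Prop) (lP lQ : list (S -> Prop)) :
  nonempty_subsets_in P -> nonempty_subsets_in Q ->
  (forall T, List.In T lP <-> (exists r, T r) /\ (forall r, T r -> P r)) ->
  (forall T, List.In T lQ <-> (exists r, T r) /\ (forall r, T r -> Q r)) ->
  exists s, fresh_for P s /\ fresh_for Q s.
Proof.
move=> subP subQ lPP lQQ.
have [|s [notin add]] := @ash_avoid (lP ++ lQ).
  move=> F /(List.in_app_or lP lQ F) [/lPP [Fne FP] | /lQQ [Fne FQ]].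
    exact: subP.
  exact: subQ.
have fresh_of_mem T : List.In T lP \/ List.In T lQ -> ~ T s /\ Ash (fun r => r = s \/ T r).
  by move=> /(List.in_or_app lP lQ T) lT; split; [apply: notin | apply: add].
by exists s; split=> T Tne TP; apply: fresh_of_mem; [left; apply/lPP | right; apply/lQQ].
Qed.

Definition incident N (R : S -> 'I_N -> 'I_N -> Prop) (x : 'I_N) (r : S) : Prop :=
  exists u, R r x u.

(* Conditions (1), (2), (3) and (5) of the definition of A_S; (4) is [total]. *)
Record admissible N (R : S -> 'I_N -> 'I_N -> Prop) : Prop := Admissible {
  adm_irrefl : forall s x, ~ R s x x;
  adm_sym : forall s x y, R s x y -> R s y x;
  adm_label_uniq : forall s t x y, R s x y -> R t x y -> s = t;
  adm_nbr_uniq : forall s x y z, R s x y -> R s x z -> y = z;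
  adm_ash : forall x, nonempty_subsets_in (incident R x) }.

Definition total N (R : S -> 'I_N -> 'I_N -> Prop) : Prop :=
  forall x y, x <> y -> exists r, R r x y.

Lemma in_A_ash_admissible (A : fstruct S) : in_A_ash Ash A -> admissible (Defs.frel A).
Proof.
move=> HA; split.
- by move=> s x; case: (HA x x x s s).
- by move=> s x y; case: (HA x y y s s) => _ [].
- by move=> s t x y; case: (HA x y y s t) => _ [_ []].
- by move=> s x y z; case: (HA x y z s s) => _ [_ [_ []]].
- by move=> x T Tne; have [r _] := Tne; case: (HA x x x r r) => _ [_ [_ [_ [_]]]]; apply.
Qed.

(* Condition (4) of [in_A_ash] sits under the quantifiers over labels, so it
   can only be extracted when S is inhabited. *)
Lemma in_A_ash_total (A : fstruct S) (s : S) : in_A_ash Ash A -> total (Defs.frel A).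
Proof. by move=> HA x y; case: (HA x y y s s) => _ [_ [_ [_ []]]]. Qed.

Lemma admissible_total_in_A_ash (A : fstruct S) :
  admissible (Defs.frel A) -> total (Defs.frel A) -> in_A_ash Ash A.
Proof.
move=> [irr sym lu nu ash] tot x y z s t.
by do ![split]; [exact: irr | exact: sym | exact: lu | exact: nu | exact: tot | exact: ash].
Qed.

Section Embedding.

Variables (B A : fstruct S) (f : 'I_(fsize B) -> 'I_(fsize A)).
Hypothesis f_emb : @embedding S B A f.

Lemma admissible_embedding : admissible (Defs.frel A) -> admissible (Defs.frel B).
Proof.
have [f_inj f_rel] := f_emb; move=> [irr sym lu nu ash]; split.
- by move=> s x; rewrite f_rel.
- by move=> s x y; rewrite !f_rel; apply: sym.
- by move=> s t x y; rewrite !f_rel; apply: lu.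
- by move=> s x y z; rewrite !f_rel => Hy Hz; apply: f_inj; apply: nu Hy Hz.
- move=> x; apply: nonempty_subsets_in_sub (ash (f x)) => r [u].
  by rewrite f_rel; exists (f u).
Qed.

Lemma total_embedding : total (Defs.frel A) -> total (Defs.frel B).
Proof.
have [f_inj f_rel] := f_emb; move=> tot x y xy.
have [|r Ar] := tot (f x) (f y) _; first by move/f_inj.
by exists r; rewrite f_rel.
Qed.

End Embedding.

Lemma in_A_ash_embeds (A B : fstruct S) : in_A_ash Ash A -> embeds B A -> in_A_ash Ash B.
Proof.
move=> HA [f f_emb] x y z s t.
apply: admissible_total_in_A_ash.
  exact: admissible_embedding f_emb (in_A_ash_admissible HA).
exact: total_embedding f_emb (in_A_ash_total s HA).
Qed.

Lemma embedding_into_admissible (A : fstruct S) N (R : S -> 'I_N -> 'I_N -> Prop)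
    (f : 'I_(fsize A) -> 'I_N) :
  in_A_ash Ash A -> admissible R -> injective f ->
  (forall s x y, Defs.frel A s x y -> R s (f x) (f y)) ->
  @embedding S A (FStruct R) f.
Proof.
move=> HA admR f_inj f_hom; split=> // s x y; split; first exact: f_hom.
have [<- /(adm_irrefl admR)//|/eqP xy Rfxy] := eqVneq x y.
have [r Axy] := in_A_ash_total s HA xy.
by rewrite -(adm_label_uniq admR (f_hom _ _ _ Axy) Rfxy).
Qed.

Definition sum_rel m n (RA : S -> 'I_m -> 'I_m -> Prop) (RB : S -> 'I_n -> 'I_n -> Prop)
    (s : S) (i j : 'I_(m + n)) : Prop :=
  match split i, split j with
  | inl a, inl a' => RA s a a'
  | inr b, inr b' => RB s b b'
  | _, _ => False
  end.

Lemma sum_rel_lshift m n RA RB s (a a' : 'I_m) :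
  @sum_rel m n RA RB s (lshift n a) (lshift n a') = RA s a a'.
Proof. by rewrite /sum_rel (unsplitK (inl a)) (unsplitK (inl a')). Qed.

Lemma sum_rel_rshift m n RA RB s (b b' : 'I_n) :
  @sum_rel m n RA RB s (rshift m b) (rshift m b') = RB s b b'.
Proof. by rewrite /sum_rel (unsplitK (inr b)) (unsplitK (inr b')). Qed.

Lemma admissible_sum m n RA RB :
  admissible RA -> admissible RB -> admissible (@sum_rel m n RA RB).
Proof.
move=> [irrA symA luA nuA ashA] [irrB symB luB nuB ashB]; rewrite /sum_rel; split.
- by move=> s x; case: split => a; [apply: irrA | apply: irrB].
- by move=> s x y; case: split => a; case: split => b //; [apply: symA | apply: symB].
- by move=> s t x y; case: split => a; case: split => b //; [apply: luA | apply: luB].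
- move=> s x y z Hy Hz; apply: (can_inj splitK); move: Hy Hz.
  case: split => a; case: split => b; case: split => c //= Hb Hc.
    by rewrite (nuA _ _ _ _ Hb Hc).
  by rewrite (nuB _ _ _ _ Hb Hc).
- move=> x; case Ex: (split x) => [a|b].
    apply: nonempty_subsets_in_sub (ashA a) => r [u].
    by rewrite Ex; case: split => // a' ?; exists a'.
  apply: nonempty_subsets_in_sub (ashB b) => r [u].
  by rewrite Ex; case: split => // b' ?; exists b'.
Qed.

Definition add_edge N (R : S -> 'I_N -> 'I_N -> Prop) (x y : 'I_N) (s : S) :
    S -> 'I_N -> 'I_N -> Prop :=
  fun t u v => R t u v \/ t = s /\ (u = x /\ v = y \/ u = y /\ v = x).

Lemma incident_add_edge N (R : S -> 'I_N -> 'I_N -> Prop) x y s u r :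
  incident (add_edge R x y s) u r -> incident R u r \/ (u = x \/ u = y) /\ r = s.
Proof. by case=> v [Ruv|[-> [[-> _]|[-> _]]]]; [left; exists v | right | right]; auto. Qed.

Lemma admissible_add_edge N (R : S -> 'I_N -> 'I_N -> Prop) x y s :
  admissible R -> x <> y -> (forall r, ~ R r x y) ->
  fresh_for (incident R x) s -> fresh_for (incident R y) s ->
  admissible (add_edge R x y s).
Proof.
move=> [irr sym lu nu ash] xy no_xy fresh_x fresh_y.
have [sx sy] := (fresh_for_notin fresh_x, fresh_for_notin fresh_y).
have no_yx r : ~ R r y x by move/sym; apply: no_xy.
split.
- by move=> t u [/irr|[_ [[-> yx]|[-> yx]]]] //; apply: xy.
- by move=> t u v [/sym|[-> [[-> ->]|[-> ->]]]]; [left | right | right]; auto.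
- move=> t1 t2 u v [R1|[-> E1]] [R2|[-> E2]] //.
  + exact: lu R1 R2.
  + by case: E2 R1 => [[-> ->] /no_xy|[-> ->] /no_yx].
  + by case: E1 R2 => [[-> ->] /no_xy|[-> ->] /no_yx].
- move=> t u v w [Rv|[-> Ev]] [Rw|[Et Ew]].
  + exact: nu Rv Rw.
  + by subst t; case: Ew Rv => [[-> _]|[-> _]] Rv; [case: sx | case: sy]; exists v.
  + by case: Ev Rw => [[-> _]|[-> _]] Rw; [case: sx | case: sy]; exists w.
  + by case: Ev Ew => [[-> ->]|[-> ->]] [[E ->]|[E ->]] //; case: xy.
- move=> u.
  have [->|ux] := pselect (u = x).
    apply: nonempty_subsets_in_sub (nonempty_subsets_in_add (ash x) fresh_x).
    by move=> r /incident_add_edge [|[_ ->]]; [left | right].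
  have [->|uy] := pselect (u = y).
    apply: nonempty_subsets_in_sub (nonempty_subsets_in_add (ash y) fresh_y).
    by move=> r /incident_add_edge [|[_ ->]]; [left | right].
  by apply: nonempty_subsets_in_sub (ash u) => r /incident_add_edge [|[[/ux|/uy]]].
Qed.

Lemma exists_fresh_label N (R : S -> 'I_N -> 'I_N -> Prop) x y :
  admissible R -> exists s, fresh_for (incident R x) s /\ fresh_for (incident R y) s.
Proof.
move=> admR; have lu := adm_label_uniq admR.
have [lx lxP] := functional_subsets_listed (R := fun r u => R r x u) (fun r t u => @lu r t x u).
have [ly lyP] := functional_subsets_listed (R := fun r u => R r y u) (fun r t u => @lu r t y u).
exact: (exists_common_fresh (adm_ash admR (x := x)) (adm_ash admR (x := y)) lxP lyP).
Qed.

Definition missing N (R : S -> 'I_N -> 'I_N -> Prop) : {set 'I_N * 'I_N} :=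
  [set p | (p.1 != p.2) && ~~ `[< exists r, R r p.1 p.2 >]].

Lemma total_missing0 N (R : S -> 'I_N -> 'I_N -> Prop) : missing R = set0 -> total R.
Proof.
move=> miss0 x y /eqP xy; have : (x, y) \notin missing R by rewrite miss0 inE.
by rewrite inE /= xy negbK => /asboolP.
Qed.

Lemma missing_add_edge N (R : S -> 'I_N -> 'I_N -> Prop) x y s :
  (x, y) \in missing R -> missing (add_edge R x y s) \proper missing R.
Proof.
move=> xy_miss; apply/properP; split.
  apply/subsetP => -[u v]; rewrite !inE /= => /andP [-> /asboolPn noedge].
  by apply/asboolPn => -[r Ruv]; apply: noedge; exists r; left.
exists (x, y) => //; rewrite inE /= negb_and !negbK; apply/orP; right.
by apply/asboolP; exists s; right; auto.
Qed.

Lemma admissible_completion N (R : S -> 'I_N -> 'I_N -> Prop) :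
  admissible R ->
  exists R', [/\ admissible R', total R' & forall s x y, R s x y -> R' s x y].
Proof.
have [n] := ubnP #|missing R|.
elim: n R => // n IH R lt_miss admR.
have [miss0|[[x y] xy_miss]] := set_0Vmem (missing R).
  by exists R; split=> //; apply: total_missing0.
move: (xy_miss); rewrite inE /= => /andP [/eqP xy /asboolPn no_xy].
have [s [fresh_x fresh_y]] := exists_fresh_label x y admR.
have no_edge r : ~ R r x y by move=> Rxy; apply: no_xy; exists r.
have adm' := admissible_add_edge admR xy no_edge fresh_x fresh_y.
have lt' := leq_trans (proper_card (missing_add_edge s xy_miss)) lt_miss.
have [R' [admR' totR' subR']] := IH _ lt' adm'.
by exists R'; split=> // t u v Ruv; apply: subR'; left.
Qed.

End Ash.

Theorem lemma5 (S : Type) (Ash : (S -> Prop) -> Prop) :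
  is_ash Ash -> is_ideal_Omega (in_A_ash Ash).
Proof.
case=> _ [ash_singleton [ash_avoid _]]; split; last split.
- by exists (@FStruct S 0 (fun _ _ _ => False)) => -[].
- exact: in_A_ash_embeds.
move=> A B HA HB.
have admAB := admissible_sum (in_A_ash_admissible HA) (in_A_ash_admissible HB).
have [R [admR totR subR]] := admissible_completion ash_singleton ash_avoid admAB.
exists (FStruct R); split; first exact: admissible_total_in_A_ash.
split.
- exists (lshift (fsize B)).
  apply: embedding_into_admissible HA admR (@lshift_inj _ _) _.
  by move=> s x y Axy; apply: subR; rewrite sum_rel_lshift.
- exists (@rshift (fsize A) (fsize B)).
  apply: embedding_into_admissible HB admR (@rshift_inj _ _) _.
  by move=> s x y Bxy; apply: subR; rewrite sum_rel_rshift.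
Qed.
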